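(* Let $\boldsymbol{\mu}_1,\boldsymbol{\mu}_2\in\mathbb{R}^D$, let $\Sigma_1$ be positive definite, $\sigma>0$, and $\Sigma_2=\sigma^2\Sigma_1$. Then the zeroes in $[0,1]$ of the curvature function $\kappa(\alpha)$ are the same as the zeroes in $[0,1]$ of the cubic $$q_1(\alpha)=(\sigma^2(1-\alpha)+\alpha)^3-\alpha(1-\alpha)\mu^2\sigma^2,$$ where $\mu^2=(\boldsymbol{\mu}_2-\boldsymbol{\mu}_1)'\Sigma_1^{-1}(\boldsymbol{\mu}_2-\boldsymbol{\mu}_1)$.
   Context: Let $\phi_j(\mathbf{x})$ be the normal density with mean $\boldsymbol{\mu}_j$ and covariance $\Sigma_j$. With $\bar\alpha=1-\alpha$ and $S_\alpha=\bar\alpha\Sigma_1^{-1}+\alpha\Sigma_2^{-1}$, the ridgeline is $\mathbf{x}^*(\alpha)=S_\alpha^{-1}[\bar\alpha\Sigma_1^{-1}\boldsymbol{\mu}_1+\alpha\Sigma_2^{-1}\boldsymbol{\mu}_2]$, $\alpha\in[0,1]$. Write $\phi_j(\alpha)=\phi_j(\mathbf{x}^*(\alpha))$ with primes denoting $\alpha$-derivatives; the curvature function is $\kappa(\alpha)=\frac{\phi_2''(\alpha)\phi_1'(\alpha)-\phi_1''(\alpha)\phi_2'(\alpha)}{\phi_1(\alpha)\phi_2(\alpha)}$. *)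

From HB Require Import structures.
From mathcomp Require Import all_boot all_order all_algebra.
From mathcomp Require Import all_classical all_reals all_analysis.
Set Implicit Arguments. Unset Strict Implicit. Unset Printing Implicit Defensive.
Import Order.TTheory GRing.Theory Num.Theory.
Local Open Scope ring_scope.

Section Defs.
Variables (R : realType) (D : nat).

Definition posdef (A : 'M[R]_D) : Prop :=
  A^T = A /\ forall x : 'cV[R]_D, x != 0 -> 0 < (x^T *m A *m x) 0 0.

Definition normal_pdf (mu : 'cV[R]_D) (Sigma : 'M[R]_D) (x : 'cV[R]_D) : R :=
  expR (- (((x - mu)^T *m invmx Sigma *m (x - mu)) 0 0) / 2)
  / Num.sqrt ((2 * pi) ^+ D * \det Sigma).

Definition S_alpha (Sigma1 Sigma2 : 'M[R]_D) (alpha : R) : 'M[R]_D :=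
  (1 - alpha) *: invmx Sigma1 + alpha *: invmx Sigma2.

Definition ridgeline (mu1 mu2 : 'cV[R]_D) (Sigma1 Sigma2 : 'M[R]_D) (alpha : R)
  : 'cV[R]_D :=
  invmx (S_alpha Sigma1 Sigma2 alpha) *m
    ((1 - alpha) *: (invmx Sigma1 *m mu1) + alpha *: (invmx Sigma2 *m mu2)).

Definition phi_ridge (mu1 mu2 : 'cV[R]_D) (Sigma1 Sigma2 : 'M[R]_D)
  (mu : 'cV[R]_D) (Sigma : 'M[R]_D) : R -> R :=
  fun alpha => normal_pdf mu Sigma (ridgeline mu1 mu2 Sigma1 Sigma2 alpha).

Definition kappa (mu1 mu2 : 'cV[R]_D) (Sigma1 Sigma2 : 'M[R]_D) (alpha : R) : R :=
  let phi1 := phi_ridge mu1 mu2 Sigma1 Sigma2 mu1 Sigma1 in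
  let phi2 := phi_ridge mu1 mu2 Sigma1 Sigma2 mu2 Sigma2 in
  (derive1n 2 phi2 alpha * derive1 phi1 alpha
     - derive1n 2 phi1 alpha * derive1 phi2 alpha)
  / (phi1 alpha * phi2 alpha).

Definition mahal2 (mu1 mu2 : 'cV[R]_D) (Sigma1 : 'M[R]_D) : R :=
  ((mu2 - mu1)^T *m invmx Sigma1 *m (mu2 - mu1)) 0 0.

End Defs.

Definition q1 (R : realType) (sigma musq alpha : R) : R :=
  (sigma ^+ 2 * (1 - alpha) + alpha) ^+ 3
  - alpha * (1 - alpha) * musq * sigma ^+ 2.

From Pilot Require Import Defs.
From HB Require Import structures.
From mathcomp Require Import all_boot all_order all_algebra.
From mathcomp Require Import all_classical all_reals all_analysis.
From mathcomp Require Import ring lra.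
Set Implicit Arguments. Unset Strict Implicit. Unset Printing Implicit Defensive.
Import Order.TTheory GRing.Theory Num.Theory.
Import numFieldNormedType.Exports.
Local Open Scope ring_scope.

(** When [Sigma2 = sigma^2 Sigma1] the ridgeline is the segment
    [mu1 + w(alpha) (mu2 - mu1)] with [w = alpha / L] and
    [L = sigma^2 (1 - alpha) + alpha > 0], so that [phi_j = k_j exp (u_j)] with
    [u_j = - c_j (w - b_j)^2 / 2], where [c1 = mu^2], [b1 = 0],
    [c2 = mu^2 / sigma^2], [b2 = 1].  For such functions
    [kappa = (u2'' + u2'^2) u1' - (u1'' + u1'^2) u2'], in which [w''] cancels:
    [kappa = c1 c2 w'^3 (1 + w (w - 1) (c1 w - c2 (w - 1))) = mu^4 sigma^4 q1 / L^9].
    Since [mu^2 > 0] for [mu1 <> mu2], [kappa] and [q1] vanish together. *)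

Lemma quad_formZ (R : comPzRingType) (n : nat) (M : 'M[R]_n) (v : 'cV[R]_n) (a : R) :
  ((a *: v)^T *m M *m (a *: v)) 0 0 = a ^+ 2 * (v^T *m M *m v) 0 0.
Proof. by rewrite linearZ /= linearZ /= -!scalemxAl !mxE mulrA -expr2. Qed.

Lemma quad_formZmx (R : comPzRingType) (n : nat) (M : 'M[R]_n) (v : 'cV[R]_n) (a : R) :
  (v^T *m (a *: M) *m v) 0 0 = a * (v^T *m M *m v) 0 0.
Proof. by rewrite -scalemxAr -scalemxAl mxE. Qed.

Lemma trmx_mul_self_gt0 (R : realDomainType) (n : nat) (x : 'cV[R]_n) :
  x != 0 -> 0 < (x^T *m x) 0 0.
Proof.
move=> x_neq0; have [i xi_neq0] : exists i, x i 0 != 0.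
  apply/existsP; apply: contraR x_neq0 => /existsPn x_eq0.
  by apply/eqP/matrixP => i j; rewrite (ord1 j) mxE; apply/eqP/negbNE.
rewrite mxE (bigD1 i) //= ltr_pwDl //.
- by rewrite mxE -expr2 exprn_even_gt0.
- by apply: sumr_ge0 => j _; rewrite mxE -expr2 sqr_ge0.
Qed.

Lemma quad_form_gt0_unitmx (R : realFieldType) (n : nat) (A : 'M[R]_n) :
  (forall x : 'cV[R]_n, x != 0 -> 0 < (x^T *m A *m x) 0 0) -> A \in unitmx.
Proof.
move=> A_pos; rewrite unitmxE unitfE; apply/negP => /det0P[v v_neq0 vA0].
have := A_pos v^T; rewrite trmx_eq0 trmxK vA0 mul0mx mxE ltxx.
by move/(_ v_neq0).
Qed.

Lemma quad_form_gt0_det_gt0 (R : rcfType) (n : nat) (A : 'M[R]_n) :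
  (forall x : 'cV[R]_n, x != 0 -> 0 < (x^T *m A *m x) 0 0) -> 0 < \det A.
Proof.
move=> A_pos.
pose B (s : R) : 'M[R]_n := s *: 1%:M + (1 - s) *: A.
have B_unit s : 0 <= s <= 1 -> B s \in unitmx.
  case/andP=> s_ge0 s_le1; apply: quad_form_gt0_unitmx => x x_neq0.
  rewrite /B mulmxDr mulmxDl mxE !quad_formZmx mulmx1.
  have := trmx_mul_self_gt0 x_neq0; have := A_pos x x_neq0.
  rewrite -subr_ge0 in s_le1; nra.
(* [det (B s)] is a polynomial in [s], equal to 1 at [s = 1] and nonzero on [0, 1]. *)
pose P := \det (\matrix_(i, j) ('X * (i == j)%:R%:P + (1 - 'X) * (A i j)%:P)).
have PE s : P.[s] = \det (B s).
  rewrite -horner_evalE -det_map_mx; congr (\det _); apply/matrixP => i j.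
  by rewrite !mxE /= horner_evalE !hornerE.
rewrite ltNge; apply/negP => detA_le0.
have [|s s01] := @poly_ivt R P 0 1 ler01.
  rewrite !PE /B scale0r add0r subr0 !scale1r subrr scale0r addr0 det1.
  by rewrite detA_le0 ler01.
by rewrite /root PE; apply/negP; rewrite -unitfE -unitmxE B_unit.
Qed.

Lemma posdef_quad_invmx_gt0 (R : realType) (n : nat) (A : 'M[R]_n) (d : 'cV[R]_n) :
  posdef A -> d != 0 -> 0 < (d^T *m invmx A *m d) 0 0.
Proof.
move=> [A_sym A_pos] d_neq0; have A_unit := quad_form_gt0_unitmx A_pos.
set y := invmx A *m d; have dE : d = A *m y by rewrite mulKVmx.
have y_neq0 : y != 0 by apply: contraNneq d_neq0 => y0; rewrite dE y0 mulmx0.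
by rewrite dE trmx_mul A_sym -mulmxA mulKmx //; apply: A_pos.
Qed.

Section ExpCurvature.
Variable R : realType.
Implicit Types (f u du w dw : R -> R) (k x : R).

Lemma is_derive_expR_scaled u k x (d : R) :
  is_derive x 1 u d -> is_derive x 1 (fun y => expR (u y) * k) (expR (u x) * k * d).
Proof.
move=> u_der.
have := is_deriveM (is_derive1_comp (is_derive_expR (u x)) u_der) (is_derive_cst k x 1).
by move/is_derive_eq; apply; rewrite scaler0 add0r /= -[_ *: _]/(_ * _) mulrCA mulrA.
Qed.

Lemma derive1_expR_scaled f u du k x (ddu : R) :
  (\forall y \near x, f y = expR (u y) * k) ->
  (\forall y \near x, is_derive y (1 : R) u (du y)) -> is_derive x 1 du ddu ->
  derive1 f x = f x * du x /\ derive1n 2 f x = f x * (ddu + du x ^+ 2).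
Proof.
move=> fE u_der du_der; have fxE := nbhs_singleton fE.
have f_der : \forall y \near x, is_derive y (1 : R) f (expR (u y) * k * du y).
  apply: filterS2 (nbhs_interior fE) u_der => y fE_y u_der_y.
  by apply: near_eq_is_derive (is_derive_expR_scaled k u_der_y); apply: filterS fE_y.
have f_der_x := nbhs_singleton f_der.
split; first by rewrite derive1E derive_val fxE.
have f'E : \forall y \near x, derive1 f y = expR (u y) * k * du y.
  by apply: filterS f_der => y y_der; rewrite derive1E derive_val.
rewrite derive1nS derive1n1 derive1E (near_eq_derive _ f'E).
have fdu_der := is_deriveM (is_derive_expR_scaled k (nbhs_singleton u_der)) du_der.
by rewrite derive_val fxE -![_ *: _]/(_ * _); ring.
Qed.

Lemma curvature_expR_scaled f1 f2 u1 u2 du1 du2 k1 k2 x (ddu1 ddu2 : R) :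
  k1 != 0 -> k2 != 0 ->
  (\forall y \near x, f1 y = expR (u1 y) * k1) ->
  (\forall y \near x, f2 y = expR (u2 y) * k2) ->
  (\forall y \near x, is_derive y (1 : R) u1 (du1 y)) ->
  (\forall y \near x, is_derive y (1 : R) u2 (du2 y)) ->
  is_derive x 1 du1 ddu1 -> is_derive x 1 du2 ddu2 ->
  (derive1n 2 f2 x * derive1 f1 x - derive1n 2 f1 x * derive1 f2 x) / (f1 x * f2 x)
  = (ddu2 + du2 x ^+ 2) * du1 x - (ddu1 + du1 x ^+ 2) * du2 x.
Proof.
move=> k1_neq0 k2_neq0 f1E f2E u1_der u2_der du1_der du2_der.
have [-> ->] := derive1_expR_scaled f1E u1_der du1_der.
have [-> ->] := derive1_expR_scaled f2E u2_der du2_der.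
have f1_neq0 : f1 x != 0 by rewrite (nbhs_singleton f1E) mulf_neq0 // gt_eqF ?expR_gt0.
have f2_neq0 : f2 x != 0 by rewrite (nbhs_singleton f2E) mulf_neq0 // gt_eqF ?expR_gt0.
by field; rewrite f1_neq0 f2_neq0.
Qed.

Lemma is_derive_gauss_exponent w dw c b x :
  is_derive x 1 w (dw x) ->
  is_derive x 1 (fun y => - (c * (w y - b) ^+ 2) / 2) (- (c * (w x - b) * dw x)).
Proof.
move=> w_der.
have := is_deriveM (is_deriveN (is_deriveM (is_derive_cst c x 1)
  (is_deriveX 2 (is_deriveB w_der (is_derive_cst b x 1))))) (is_derive_cst (2^-1 : R) x 1).
move/is_derive_eq; apply; rewrite /= -![_ *: _]/(_ * _) -[(w - cst b) x]/(w x - b).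
by field.
Qed.

Lemma is_derive_gauss_exponent' w dw c b x (ddw : R) :
  is_derive x 1 w (dw x) -> is_derive x 1 dw ddw ->
  is_derive x 1 (fun y => - (c * (w y - b) * dw y))
    (- (c * (dw x ^+ 2 + (w x - b) * ddw))).
Proof.
move=> w_der dw_der.
have := is_deriveN (is_deriveM (is_deriveM (is_derive_cst c x 1)
  (is_deriveB w_der (is_derive_cst b x 1))) dw_der).
move/is_derive_eq; apply; rewrite /= -![_ *: _]/(_ * _) -[(cst c * _) x]/(c * (w x - b)).
by ring.
Qed.

End ExpCurvature.

Section RidgeWeight.
Variable R : realType.
Implicit Types t x y : R.

Definition ridge_denom t y : R := t * (1 - y) + y.
Definition ridge_weight t y : R := y / ridge_denom t y.
Definition ridge_weight' t y : R := t / ridge_denom t y ^+ 2.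

Lemma is_derive_ridge_denom t x : is_derive x 1 (ridge_denom t) (1 - t).
Proof.
have id_der := is_derive_id x (1 : R).
have := is_deriveD (is_deriveM (is_derive_cst t x 1)
  (is_deriveB (is_derive_cst (1 : R) x 1) id_der)) id_der.
by move/is_derive_eq; apply; rewrite /= -![_ *: _]/(_ * _); ring.
Qed.

Lemma is_derive_ridge_weight t x :
  ridge_denom t x != 0 -> is_derive x 1 (ridge_weight t) (ridge_weight' t x).
Proof.
move=> L_neq0.
have := is_deriveM (is_derive_id x (1 : R))
  (is_deriveV L_neq0 (is_derive_ridge_denom t x)).
move/is_derive_eq; apply; rewrite /= -![_ *: _]/(_ * _).
rewrite /ridge_weight' /ridge_denom in L_neq0 *.
by field.
Qed.

Lemma is_derive_ridge_weight' t x :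
  ridge_denom t x != 0 ->
  is_derive x 1 (ridge_weight' t) (- (2 * t * (1 - t)) / ridge_denom t x ^+ 3).
Proof.
move=> L_neq0.
have L2_neq0 : (ridge_denom t ^+ 2) x != 0.
  by rewrite -[(_ ^+ 2) x]/(ridge_denom t x ^+ 2) expf_neq0.
have := is_deriveM (is_derive_cst t x 1)
  (is_deriveV L2_neq0 (is_deriveX 2 (is_derive_ridge_denom t x))).
move/is_derive_eq; apply; rewrite /= -![_ *: _]/(_ * _).
rewrite -[(_ ^+ 2) x]/(ridge_denom t x ^+ 2) /ridge_denom in L_neq0 *.
by field.
Qed.

Lemma ridge_denom_gt0_near t y :
  0 < ridge_denom t y -> \forall z \near y, 0 < ridge_denom t z.
Proof.
move=> L_gt0.
have [/derivable1_diffP/differentiable_continuous L_cont _] := is_derive_ridge_denom t y.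
exact: cvgr_gt L_cont _ L_gt0.
Qed.

End RidgeWeight.

Lemma curvature_gauss_chain (R : comPzRingType) (c1 c2 b1 b2 w dw ddw : R) :
  (- (c2 * (dw ^+ 2 + (w - b2) * ddw)) + (- (c2 * (w - b2) * dw)) ^+ 2)
    * - (c1 * (w - b1) * dw)
  - (- (c1 * (dw ^+ 2 + (w - b1) * ddw)) + (- (c1 * (w - b1) * dw)) ^+ 2)
    * - (c2 * (w - b2) * dw)
  = c1 * c2 * dw ^+ 3 * (b2 - b1 + (w - b1) * (w - b2) * (c1 * (w - b1) - c2 * (w - b2))).
Proof. by ring. Qed.

Section ProportionalCovariances.
Variables (R : realType) (D : nat).
Implicit Types (mu d : 'cV[R]_D) (S : 'M[R]_D) (s t y : R).

Lemma ridgeline_proportional (mu1 mu2 : 'cV[R]_D) S t y :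
  S \in unitmx -> t != 0 -> ridge_denom t y != 0 ->
  ridgeline mu1 mu2 S (t *: S) y = mu1 + ridge_weight t y *: (mu2 - mu1).
Proof.
move=> S_unit t_neq0 L_neq0; have t_unit : t \is a GRing.unit by rewrite unitfE.
have iZ : invmx (t *: S) = t^-1 *: invmx S by rewrite invmxZ // unitmxZ.
have SaE : S_alpha S (t *: S) y = (ridge_denom t y / t) *: invmx S.
  by rewrite /S_alpha iZ scalerA -scalerDl /ridge_denom; congr (_ *: _); field.
have Sa_unit : ridge_denom t y / t \is a GRing.unit by rewrite unitfE mulf_neq0 ?invr_eq0.
rewrite /ridgeline SaE invmxZ; last by rewrite unitmxZ ?unitmx_inv.
rewrite (invmxK S) iZ -!scalemxAl mulmxDr -!scalemxAr !mulKVmx //.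
apply/matrixP => i j; rewrite !mxE /ridge_weight /ridge_denom in L_neq0 *.
by field; rewrite t_neq0 L_neq0.
Qed.

(* Qualified to avoid mathcomp-analysis' own [normal_pdf]. *)
Lemma normal_pdf_line mu d S s :
  Defs.normal_pdf mu S (mu + s *: d) =
  expR (- ((d^T *m invmx S *m d) 0 0 * s ^+ 2) / 2)
    / Num.sqrt ((2 * pi) ^+ D * \det S).
Proof. by rewrite /Defs.normal_pdf addrC addKr quad_formZ (mulrC (s ^+ 2)). Qed.

Lemma phi_ridge_proportional1 (mu1 mu2 : 'cV[R]_D) S t y :
  S \in unitmx -> t != 0 -> ridge_denom t y != 0 ->
  phi_ridge mu1 mu2 S (t *: S) mu1 S y =
  expR (- (mahal2 mu1 mu2 S * (ridge_weight t y - 0) ^+ 2) / 2)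
    / Num.sqrt ((2 * pi) ^+ D * \det S).
Proof.
by move=> *; rewrite /phi_ridge ridgeline_proportional // normal_pdf_line subr0.
Qed.

Lemma phi_ridge_proportional2 (mu1 mu2 : 'cV[R]_D) S t y :
  S \in unitmx -> t != 0 -> ridge_denom t y != 0 ->
  phi_ridge mu1 mu2 S (t *: S) mu2 (t *: S) y =
  expR (- (t^-1 * mahal2 mu1 mu2 S * (ridge_weight t y - 1) ^+ 2) / 2)
    / Num.sqrt ((2 * pi) ^+ D * \det (t *: S)).
Proof.
move=> S_unit t_neq0 L_neq0; rewrite /phi_ridge ridgeline_proportional //.
have -> : mu1 + ridge_weight t y *: (mu2 - mu1) =
          mu2 + (ridge_weight t y - 1) *: (mu2 - mu1).
  by apply/matrixP => i j; rewrite !mxE; ring.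
by rewrite normal_pdf_line invmxZ ?unitmxZ ?unitfE // quad_formZmx.
Qed.

Lemma kappa_proportional (mu1 mu2 : 'cV[R]_D) S sigma y :
  posdef S -> 0 < sigma -> 0 < ridge_denom (sigma ^+ 2) y ->
  kappa mu1 mu2 S (sigma ^+ 2 *: S) y =
  mahal2 mu1 mu2 S ^+ 2 * sigma ^+ 4 * q1 sigma (mahal2 mu1 mu2 S) y
    / ridge_denom (sigma ^+ 2) y ^+ 9.
Proof.
move=> [_ S_pos] sigma_gt0 L_gt0.
set t := sigma ^+ 2; set m := mahal2 mu1 mu2 S.
have t_neq0 : t != 0 by rewrite expf_neq0 ?gt_eqF.
have S_unit := quad_form_gt0_unitmx S_pos.
have norm_neq0 (A : 'M[R]_D) : 0 < \det A -> (Num.sqrt ((2 * pi) ^+ D * \det A))^-1 != 0.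
  by move=> detA_gt0; rewrite invr_eq0 gt_eqF // sqrtr_gt0 mulr_gt0 ?exprn_gt0 ?mulr_gt0 ?pi_gt0.
have detS_gt0 := quad_form_gt0_det_gt0 S_pos.
have detSt_gt0 : 0 < \det (t *: S) by rewrite detZ mulr_gt0 // exprn_gt0 ?exprn_gt0.
have L_near := ridge_denom_gt0_near L_gt0.
have phi1E : \forall z \near y, phi_ridge mu1 mu2 S (t *: S) mu1 S z =
    expR (- (m * (ridge_weight t z - 0) ^+ 2) / 2) / Num.sqrt ((2 * pi) ^+ D * \det S).
  by apply: filterS L_near => z /lt0r_neq0; apply: phi_ridge_proportional1.
have phi2E : \forall z \near y, phi_ridge mu1 mu2 S (t *: S) mu2 (t *: S) z =
    expR (- (t^-1 * m * (ridge_weight t z - 1) ^+ 2) / 2)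
      / Num.sqrt ((2 * pi) ^+ D * \det (t *: S)).
  by apply: filterS L_near => z /lt0r_neq0; apply: phi_ridge_proportional2.
have w_der : \forall z \near y, is_derive z (1 : R) (ridge_weight t) (ridge_weight' t z).
  by apply: filterS L_near => z Lz; apply: is_derive_ridge_weight; rewrite gt_eqF.
have u_der (c b : R) : \forall z \near y, is_derive z (1 : R)
    (fun x => - (c * (ridge_weight t x - b) ^+ 2) / 2)
    (- (c * (ridge_weight t z - b) * ridge_weight' t z)).
  by apply: filterS w_der => z; apply: is_derive_gauss_exponent.
have du_der (c b : R) := is_derive_gauss_exponent' c b (nbhs_singleton w_der)
  (is_derive_ridge_weight' (lt0r_neq0 L_gt0)).
rewrite /kappa (curvature_expR_scaled (norm_neq0 _ detS_gt0) (norm_neq0 _ detSt_gt0)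
  phi1E phi2E (u_der _ _) (u_der _ _) (du_der _ _) (du_der _ _)) curvature_gauss_chain.
have L_neq0 := lt0r_neq0 L_gt0.
rewrite /ridge_weight' /ridge_weight /q1 /t /ridge_denom in L_neq0 *.
by field; rewrite L_neq0 gt_eqF.
Qed.

End ProportionalCovariances.

Theorem lemma1 (R : realType) (D : nat) (mu1 mu2 : 'cV[R]_D)
  (Sigma1 Sigma2 : 'M[R]_D) (sigma : R) :
  posdef Sigma1 -> 0 < sigma -> Sigma2 = sigma ^+ 2 *: Sigma1 ->
  mu1 != mu2 ->
  forall alpha : R, 0 <= alpha <= 1 ->
    (kappa mu1 mu2 Sigma1 Sigma2 alpha = 0 <->
     q1 sigma (mahal2 mu1 mu2 Sigma1) alpha = 0).
Proof.
move=> S1_posdef sigma_gt0 -> mu1_neq_mu2 alpha /andP[alpha_ge0 alpha_le1].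
have L_gt0 : 0 < ridge_denom (sigma ^+ 2) alpha.
  have : 0 < sigma ^+ 2 by rewrite exprn_gt0.
  by rewrite /ridge_denom; case: (ltrP 0 alpha); nra.
have m_gt0 : 0 < mahal2 mu1 mu2 Sigma1.
  by apply: posdef_quad_invmx_gt0; rewrite // subr_eq0 eq_sym.
rewrite kappa_proportional //; split => [/eqP|->]; last by rewrite mulr0 mul0r.
rewrite !mulf_eq0 invr_eq0 !expf_eq0 (gt_eqF m_gt0) (gt_eqF sigma_gt0) (gt_eqF L_gt0).
by rewrite /= orbF => /eqP.
Qed.
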